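(* Let $m,n,r$ be positive integers with $r<\min\{m,n\}$, $\mathcal{M}=\{X\in\mathbb{R}^{m\times n}:\operatorname{rank}X\le r\}$. For $X^*\in\mathcal{M}$ let $\mathcal{Y}_{X^*}\subset\mathbb{R}^{m\times r}\times\mathbb{R}^{r\times n}$ be the set of pairs $(B,C)$, where $B\in\mathbb{R}^{m\times r}$ has top $r\times r$ block equal to the identity $I_r$ and $C\in\mathbb{R}^{r\times n}$ is arbitrary, satisfying $$\sum_{i\in[m]}(b_i^\top c_j)^\ell=\sum_{i\in[m]}(x^*_{ij})^\ell\qquad\text{for all }\ell\in[m],\ j\in[n],$$ where $b_i^\top$ is the $i$-th row of $B$ and $c_j$ the $j$-th column of $C$. Then there exists a Zariski-open dense set $\mathcal{U}\subset\mathcal{M}$ such that for every $X^*\in\mathcal{U}$ and every $\Pi\in\mathcal{P}_m$, the matrix $\Pi X^*$ has a unique factorization $\Pi X^*=B^*_\Pi C^*_\Pi$ with $B^*_\Pi\in\mathbb{R}^{m\times r}$ having top $r\times r$ block $I_r$ and $C^*_\Pi\in\mathbb{R}^{r\times n}$, and $$\mathcal{Y}_{X^*}=\{(B^*_\Pi,C^*_\Pi):\Pi\in\mathcal{P}_m\}.$$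
   Context: $\mathcal{P}_m$ denotes the set of $m\times m$ permutation matrices; $[k]=\{1,\dots,k\}$. $\mathcal{M}$ carries the Zariski topology. Note that the right-hand sides $\sum_i (x^*_{ij})^\ell$ coincide with $\sum_i\tilde x_{ij}^\ell$ for $\tilde X=[\tilde\Pi_1x_1^*\cdots\tilde\Pi_nx_n^*]$ with arbitrary permutations $\tilde\Pi_j$, so $\mathcal{Y}_{X^*}$ can be computed from such permuted data. *)

From HB Require Import structures.
From mathcomp Require Import all_boot all_order all_algebra all_fingroup.
From mathcomp Require Import reals.
From mathcomp Require Import mpoly.
Set Implicit Arguments. Unset Strict Implicit. Unset Printing Implicit Defensive.
Import Order.TTheory GRing.Theory Num.Theory.
Local Open Scope ring_scope.

Definition mx_eval (R : realType) (m n : nat) (p : {mpoly R[m * n]})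
  (X : 'M[R]_(m, n)) : R := p.@[fun k => mxvec X 0 k].

Definition lowrank (R : realType) (m n r : nat) (X : 'M[R]_(m, n)) : Prop :=
  (\rank X <= r)%N.

(* U is Zariski-open in M: U = M minus the common zero set of a family S
   of polynomials. *)
Definition zariski_open_in (R : realType) (m n : nat)
  (M U : 'M[R]_(m, n) -> Prop) : Prop :=
  exists S : {mpoly R[m * n]} -> Prop,
    forall X, U X <-> (M X /\ exists p, S p /\ mx_eval p X <> 0).

(* U is Zariski-dense in M: every polynomial vanishing on U vanishes on M
   (i.e. the Zariski closure of U contains M). *)
Definition zariski_dense_in (R : realType) (m n : nat)
  (M U : 'M[R]_(m, n) -> Prop) : Prop :=
  forall p : {mpoly R[m * n]},
    (forall X, U X -> mx_eval p X = 0) -> forall X, M X -> mx_eval p X = 0.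

Definition top_id (R : realType) (m r : nat) (B : 'M[R]_(m, r)) : Prop :=
  forall (i : 'I_m) (j : 'I_r), (i < r)%N -> B i j = ((i : nat) == j)%:R.

Definition Yset (R : realType) (m n r : nat) (X : 'M[R]_(m, n))
  (B : 'M[R]_(m, r)) (C : 'M[R]_(r, n)) : Prop :=
  top_id B /\
  forall (l : nat) (j : 'I_n), (1 <= l <= m)%N ->
    \sum_(i < m) ((B *m C) i j) ^+ l = \sum_(i < m) (X i j) ^+ l.

From HB Require Import structures.
From mathcomp Require Import all_boot all_order all_algebra all_fingroup.
From mathcomp Require Import reals.
From mathcomp Require Import mpoly.
From mathcomp Require Import ring zify.
Set Implicit Arguments. Unset Strict Implicit. Unset Printing Implicit Defensive.
Import Order.TTheory GRing.Theory Num.Theory.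
Local Open Scope ring_scope.

(* The open set is U = {X in M | P(X) <> 0} for an explicit polynomial
   P = (mixing obstruction) * (row genericity):
   - row genericity: every r rows of X are independent (a product of sums of
     squares of r x r minors); then every row permutation of X has a unique
     factorization B C with top block of B equal to I_r;
   - mixing obstruction: for every assignment sg of permutations to the columns
     that is not constant, the matrix whose column j is column j of X permuted
     by sg j has rank > r (a product of sums of squares of (r+1) x (r+1) minors).
   Since the first m power sums determine a multiset (Newton's identities), a
   pair (B, C) solves the power-sum system iff B C is such a column-wise
   permutation of X; the mixing obstruction forces sg to be constant, i.e.
   B C = Pi X for a single permutation Pi.  Density of U in M holds because M,
   the image of (B, C) |-> B C, is irreducible and each factor of P is nonzero
   at an explicitly constructed point of M. *)

Section PowerSums.
Variable R : numFieldType.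

(* A polynomial vanishing at every nonzero point is zero (infinitely many
   roots in characteristic zero). *)
Lemma poly_eq0_off0 (p : {poly R}) : (forall x : R, x != 0 -> p.[x] = 0) -> p = 0.
Proof.
move=> p0; apply: (@roots_geq_poly_eq0 _ p [seq i.+1%:R | i <- iota 0 (size p)]).
- by apply/allP => _ /mapP [i _ ->]; apply/eqP/p0; rewrite pnatr_eq0.
- by rewrite map_inj_uniq ?iota_uniq // => i j /eqP; rewrite eqr_nat eqSS => /eqP.
- by rewrite size_map size_iota.
Qed.

(* The reversed characteristic polynomial prod_(x in s) (1 - x X) of a
   multiset s; its coefficients are the signed elementary symmetric functions. *)
Definition revchar (s : seq R) : {poly R} := \prod_(x <- s) (1 - x *: 'X).

(* The truncated generating series sum_(l < k) p_(l+1)(s) X^l of the power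
   sums of s, written as sum_(x in s) x (1 + xX + ... + (xX)^(k-1)). *)
Definition psum_series (k : nat) (s : seq R) : {poly R} :=
  \sum_(x <- s) x%:P * \sum_(l < k) (x *: 'X) ^+ l.

Lemma psum_seriesE (k : nat) (s : seq R) :
  psum_series k s = \sum_(l < k) (\sum_(x <- s) x ^+ l.+1) *: 'X^l.
Proof.
rewrite /psum_series (eq_bigr (fun x => \sum_(l < k) x ^+ l.+1 *: 'X^l)).
  by rewrite exchange_big; apply: eq_bigr => l _; rewrite scaler_suml.
move=> x _; rewrite mulr_sumr; apply: eq_bigr => l _.
by rewrite exprZn mul_polyC scalerA -exprS.
Qed.

(* Newton's identities in generating-function form:
   E' + E T = 0 modulo X^k, for E = revchar s and T = psum_series k s. *)
Lemma newton_identity (k : nat) (s : seq R) :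
  exists Q, (revchar s)^`() + revchar s * psum_series k s = 'X^k * Q.
Proof.
elim: s => [|x s [Q IH]].
  by exists 0; rewrite /revchar /psum_series !big_nil derivC mulr0 addr0 mulr0.
exists ((1 - x *: 'X) * Q - x ^+ k.+1 *: revchar s).
rewrite /revchar /psum_series !big_cons -/(revchar s) -/(psum_series k s).
rewrite derivM derivB derivC derivZ derivX.
have geom : (1 - x *: 'X) * (\sum_(l < k) (x *: 'X) ^+ l) = 1 - 'X^k * (x ^+ k)%:P.
  rewrite -!mul_polyC; have := subrX1 (x%:P * 'X : {poly R}) k.
  rewrite exprMn -rmorphXn /= => E.
  by apply: oppr_inj; rewrite opprB -mulNr opprB -E; ring.
set G := \sum_(l < k) _ in geom *.
rewrite mulrDr (_ : (1 - x *: 'X) * revchar s * (x%:P * G) =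
  x%:P * revchar s * ((1 - x *: 'X) * G)); last by ring.
rewrite geom (_ : _ + _ + (_ + _) = (1 - x *: 'X) *
  ((revchar s)^`() + revchar s * psum_series k s) - x ^+ k.+1 *: ('X^k * revchar s)).
  by rewrite IH mulrBr mulrCA scalerAr.
by rewrite -!mul_polyC exprS rmorphM /= mulr1 sub0r; ring.
Qed.

Lemma size_revchar (s : seq R) : (size (revchar s) <= (size s).+1)%N.
Proof.
elim: s => [|x s IH]; first by rewrite /revchar big_nil size_poly1.
rewrite /revchar big_cons -/(revchar s) /=.
apply: (leq_trans (size_polyMleq _ _)).
have lin : (size ((1 - x *: 'X)%R : {poly R}) <= 2)%N.
  apply: (leq_trans (size_polyD _ _)); rewrite size_poly1 geq_max /= size_polyN.
  by apply: (leq_trans (size_scale_leq _ _)); rewrite size_polyX.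
by have := leq_add lin IH; lia.
Qed.

Lemma revchar_coef0 (s : seq R) : (revchar s)`_0 = 1.
Proof.
elim: s => [|x s IH]; first by rewrite /revchar big_nil coef1.
rewrite /revchar big_cons -/(revchar s) coef0M IH mulr1.
by rewrite coefB coef1 coefZ coefX mulr0 subr0.
Qed.

(* The first k power sums determine revchar s for multisets of size <= k:
   E' = - E T mod X^k with E(0) = 1 fixes the coefficients of E one by one. *)
Lemma revchar_psum_inj (k : nat) (s t : seq R) :
  (size s <= k)%N -> (size t <= k)%N ->
  psum_series k s = psum_series k t -> revchar s = revchar t.
Proof.
move=> hs ht eqT; have [Qs Es] := newton_identity k s.
have [Qt Et] := newton_identity k t.
set D := revchar s - revchar t.
have ED : D^`() + D * psum_series k s = 'X^k * (Qs - Qt).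
  by rewrite /D mulrBr -Es -Et -eqT derivB mulrBl opprD addrACA.
have low : forall j, (j <= k)%N -> forall i, (i <= j)%N -> D`_i = 0.
  elim=> [_ i|j IH lt_jk i].
    by rewrite leqn0 => /eqP ->; rewrite /D coefB !revchar_coef0 subrr.
  rewrite leq_eqVlt => /orP [/eqP ->|]; last by rewrite ltnS; apply/IH/ltnW.
  have := congr1 (fun p : {poly R} => p`_j) ED.
  rewrite coefD coef_deriv coefM coefXnM lt_jk /= big1 ?addr0; last first.
    by move=> i0 _; rewrite IH ?mul0r ?(ltnW lt_jk) // -ltnS ltn_ord.
  by move/eqP; rewrite mulrn_eq0 /= => /eqP.
apply/subr0_eq/polyP => i; rewrite coef0.
have [le_ik|lt_ki] := leqP i k; first exact: (low k).
apply: nth_default; apply: (leq_trans (size_polyD _ _)).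
by rewrite size_polyN geq_max !(leq_trans (size_revchar _)) // (leq_trans _ lt_ki).
Qed.

Lemma revchar_reversal (s : seq R) (w : R) : w != 0 ->
  (\prod_(x <- s) ('X - x%:P)).[w] = w ^+ size s * (revchar s).[w^-1].
Proof.
move=> w0; elim: s => [|x s IH]; first by rewrite /revchar !big_nil expr0 mul1r !hornerE.
rewrite /revchar !big_cons -/(revchar s) !hornerM IH /= exprS.
rewrite hornerXsubC hornerD hornerN hornerZ hornerX -polyC1 hornerC.
by field.
Qed.

Lemma revchar_perm (s t : seq R) :
  size s = size t -> revchar s = revchar t -> perm_eq s t.
Proof.
move=> eq_sz eqE; apply/prod_XsubC_eq/eqP; rewrite -subr_eq0; apply/eqP.
apply: poly_eq0_off0 => w w0.
by rewrite hornerD hornerN !revchar_reversal // eq_sz eqE subrr.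
Qed.

Lemma power_sums_perm (m : nat) (a b : 'I_m -> R) :
  (forall l, (1 <= l <= m)%N -> \sum_i a i ^+ l = \sum_i b i ^+ l) ->
  exists s : 'S_m, forall i, b i = a (s i).
Proof.
move=> psum_ab; set sa := [tuple a i | i < m]; set sb := [seq b i | i <- enum 'I_m].
have size_sb : size sb = m by rewrite size_map size_enum_ord.
have eqT : psum_series m sa = psum_series m sb.
  rewrite !psum_seriesE; apply: eq_bigr => l _; congr (_ *: _).
  rewrite /sa /sb /= !big_map; move: (psum_ab l.+1); rewrite [index_enum _]unlock.
  by apply; rewrite /= ltn_ord.
have := revchar_psum_inj (eq_leq (size_tuple sa)) (eq_leq size_sb) eqT.
move/revchar_perm; rewrite size_tuple size_sb => /(_ erefl).
rewrite perm_sym => /tuple_permP [p sb_p]; exists p => i.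
have := congr1 (fun s : seq R => nth 0 s i) sb_p.
rewrite /sb (nth_map i) ?size_enum_ord // nth_ord_enum => ->.
by rewrite /= (nth_map i) ?size_enum_ord // nth_ord_enum tnth_map tnth_ord_tuple.
Qed.

End PowerSums.

Section GenericMatrix.
Variables (R : realType) (m n : nat).

Definition generic_mx : 'M[{mpoly R[m * n]}]_(m, n) :=
  \matrix_(i, j) 'X_(mxvec_index i j).

Definition natural_mx_fun (F : forall A : comPzRingType, 'M[A]_(m, n) -> A) :=
  forall (A B : comPzRingType) (phi : {rmorphism A -> B}) (Y : 'M[A]_(m, n)),
    F B (map_mx phi Y) = phi (F A Y).

(* A natural matrix function F is a polynomial function: the polynomial
   F(generic_mx) evaluates to F(X) at X. *)
Lemma mx_eval_natural (F : forall A : comPzRingType, 'M[A]_(m, n) -> A)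
    (X : 'M[R]_(m, n)) :
  natural_mx_fun F -> mx_eval (F _ generic_mx) X = F _ X.
Proof.
move=> natF; have genX : map_mx (meval (fun k => mxvec X 0 k)) generic_mx = X.
  by apply/matrixP => i j; rewrite !mxE mevalXU mxvecE.
by rewrite -{2}genX natF.
Qed.

Lemma mx_evalM (p q : {mpoly R[m * n]}) (X : 'M[R]_(m, n)) :
  mx_eval (p * q) X = mx_eval p X * mx_eval q X.
Proof. exact: mevalM. Qed.

Lemma mx_eval1 (X : 'M[R]_(m, n)) : mx_eval 1 X = 1.
Proof. exact: meval1. Qed.

End GenericMatrix.

Lemma mmap_horner (R : comNzRingType) (N : nat) (h : 'I_N -> {poly R})
    (q : {mpoly R[N]}) (t : R) :
  (mmap polyC h q).[t] = q.@[fun k => (h k).[t]].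
Proof.
rewrite /meval /mmap -[LHS]/(horner_eval t _) rmorph_sum /=.
apply: eq_bigr => mu _; rewrite rmorphM /= /horner_eval hornerC.
congr (_ * _); rewrite /mmap1 -[LHS]/(horner_eval t _) rmorph_prod /=.
by apply: eq_bigr => i _; rewrite rmorphXn.
Qed.

Section LowRankVariety.
Variables (R : realType) (m n r : nat).

Lemma lowrank_factor (X : 'M[R]_(m, n)) :
  lowrank r X -> exists (B : 'M[R]_(m, r)) (C : 'M[R]_(r, n)), X = B *m C.
Proof.
rewrite /lowrank => rkX.
exists (col_ebase X *m pid_mx (\rank X)), (pid_mx (\rank X) *m row_ebase X).
rewrite mulmxA -[col_ebase X *m _ *m _]mulmxA mul_pid_mx minnn.
by rewrite (minn_idPr rkX) mulmx_ebase.
Qed.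

Lemma lowrank_mul (B : 'M[R]_(m, r)) (C : 'M[R]_(r, n)) : lowrank r (B *m C).
Proof. by rewrite /lowrank (leq_trans (mxrankM_maxl _ _)) // rank_leq_col. Qed.

(* The variety M is the image of the affine space of pairs (B, C); along the
   segment between two pairs, any polynomial restricts to a polynomial in t. *)
Lemma mx_eval_segment (B0 B1 : 'M[R]_(m, r)) (C0 C1 : 'M[R]_(r, n))
    (p : {mpoly R[m * n]}) :
  exists P : {poly R}, forall t,
    P.[t] = mx_eval p ((B0 + t *: (B1 - B0)) *m (C0 + t *: (C1 - C0))).
Proof.
pose BP : 'M[{poly R}]_(m, r) :=
  \matrix_(i, j) ((B0 i j)%:P + 'X * (B1 i j - B0 i j)%:P).
pose CP : 'M[{poly R}]_(r, n) :=
  \matrix_(i, j) ((C0 i j)%:P + 'X * (C1 i j - C0 i j)%:P).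
exists (mmap polyC (fun k => mxvec (BP *m CP) 0 k) p) => t.
rewrite mmap_horner /mx_eval; apply: meval_eq => k.
case/mxvec_indexP: k => i j; rewrite !mxvecE !mxE horner_sum.
by apply: eq_bigr => l _; rewrite hornerM !mxE !hornerE.
Qed.

(* p is a non-zero-divisor in the ring of polynomial functions on M, i.e.
   {X in M | p(X) <> 0} is Zariski-dense in M. *)
Definition lowrank_nzd (p : {mpoly R[m * n]}) : Prop :=
  forall q : {mpoly R[m * n]},
    (forall X, lowrank r X -> mx_eval p X * mx_eval q X = 0) ->
    forall X, lowrank r X -> mx_eval q X = 0.

Lemma lowrank_nzd1 : lowrank_nzd 1.
Proof. by move=> q pq0 X lrX; have := pq0 X lrX; rewrite mx_eval1 mul1r. Qed.

Lemma lowrank_nzdM (p1 p2 : {mpoly R[m * n]}) :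
  lowrank_nzd p1 -> lowrank_nzd p2 -> lowrank_nzd (p1 * p2).
Proof.
move=> nzd1 nzd2 q pq0; apply: nzd2 => X lrX; rewrite -mx_evalM.
apply: (nzd1 (p2 * q)) => // Y lrY.
by rewrite mx_evalM mulrA -mx_evalM; apply: pq0.
Qed.

Lemma lowrank_nzd_prod (I : finType) (P : pred I) (F : I -> {mpoly R[m * n]}) :
  (forall i, P i -> lowrank_nzd (F i)) -> lowrank_nzd (\prod_(i | P i) F i).
Proof.
move=> nzdF; apply: (big_ind lowrank_nzd) => //; first exact: lowrank_nzd1.
exact: lowrank_nzdM.
Qed.

(* Joining a factorization of a point X of M to
   one of a point W with p(W) <> 0 by a segment, p q restricts to a product
   of univariate polynomials which vanishes identically, with p nonzero. *)
Lemma lowrank_nzd_witness (p : {mpoly R[m * n]}) (W : 'M[R]_(m, n)) :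
  lowrank r W -> mx_eval p W != 0 -> lowrank_nzd p.
Proof.
move=> lrW pW q pq0 X lrX.
have [B1 [C1 defW]] := lowrank_factor lrW.
have [B0 [C0 defX]] := lowrank_factor lrX.
have seg0 k l (A0 A1 : 'M[R]_(k, l)) : A0 + 0 *: (A1 - A0) = A0.
  by rewrite scale0r addr0.
have seg1 k l (A0 A1 : 'M[R]_(k, l)) : A0 + 1 *: (A1 - A0) = A1.
  by rewrite scale1r addrC subrK.
have [P PE] := mx_eval_segment B0 B1 C0 C1 p.
have [Q QE] := mx_eval_segment B0 B1 C0 C1 q.
have PQ0 : P * Q = 0.
  by apply: poly_eq0_off0 => t _; rewrite hornerM PE QE; apply/pq0/lowrank_mul.
have P0 : P != 0.
  apply: contraNneq pW => P0.
  by rewrite defW -(seg1 _ _ B0 B1) -(seg1 _ _ C0 C1) -PE P0 horner0.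
move/eqP: PQ0; rewrite mulf_eq0 (negbTE P0) /= => /eqP Q0.
by rewrite defX -(seg0 _ _ B0 B1) -(seg0 _ _ C0 C1) -QE Q0 horner0.
Qed.

End LowRankVariety.

Definition colperm_mx (T : Type) (m n : nat) (sg : {ffun 'I_n -> 'S_m})
    (Y : 'M[T]_(m, n)) : 'M[T]_(m, n) :=
  \matrix_(i, j) Y (sg j i) j.

Lemma colperm_mx_map (T T' : Type) (phi : T -> T') (m n : nat)
    (sg : {ffun 'I_n -> 'S_m}) (Y : 'M[T]_(m, n)) :
  colperm_mx sg (map_mx phi Y) = map_mx phi (colperm_mx sg Y).
Proof. by apply/matrixP => i j; rewrite !mxE. Qed.

Definition row_minor_sqsum (A : comPzRingType) (m n k : nat)
    (f : {ffun 'I_k -> 'I_m}) (Y : 'M[A]_(m, n)) : A :=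
  \sum_(g : {ffun 'I_k -> 'I_n}) \det (mxsub f g Y) ^+ 2.

(* The sum of the squares of all k x k minors of Y; over an ordered field
   it vanishes exactly when rank Y < k. *)
Definition minor_sqsum (A : comPzRingType) (m n k : nat) (Y : 'M[A]_(m, n)) : A :=
  \sum_(f : {ffun 'I_k -> 'I_m}) row_minor_sqsum f Y.

Lemma row_minor_sqsum_map (A B : comPzRingType) (phi : {rmorphism A -> B})
    (m n k : nat) (f : {ffun 'I_k -> 'I_m}) (Y : 'M[A]_(m, n)) :
  row_minor_sqsum f (map_mx phi Y) = phi (row_minor_sqsum f Y).
Proof.
rewrite rmorph_sum; apply: eq_bigr => g _; rewrite rmorphXn /= -det_map_mx.
by congr (\det _ ^+ _); apply/matrixP => i j; rewrite !mxE.
Qed.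

Lemma minor_sqsum_map (A B : comPzRingType) (phi : {rmorphism A -> B})
    (m n k : nat) (Y : 'M[A]_(m, n)) :
  minor_sqsum k (map_mx phi Y) = phi (minor_sqsum k Y).
Proof.
by rewrite rmorph_sum; apply: eq_bigr => f _; apply: row_minor_sqsum_map.
Qed.

Lemma row_minor_sqsum_neq0 (R : realDomainType) (m n k : nat)
    (f : {ffun 'I_k -> 'I_m}) (g : {ffun 'I_k -> 'I_n}) (Y : 'M[R]_(m, n)) :
  \det (mxsub f g Y) != 0 -> row_minor_sqsum f Y != 0.
Proof.
apply: contraNneq => sum0; rewrite -sqrf_eq0; apply/eqP.
by apply: (psumr_eq0P _ sum0) => // g' _; apply: sqr_ge0.
Qed.

Lemma minor_sqsum_neq0 (R : realDomainType) (m n k : nat)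
    (f : {ffun 'I_k -> 'I_m}) (g : {ffun 'I_k -> 'I_n}) (Y : 'M[R]_(m, n)) :
  \det (mxsub f g Y) != 0 -> minor_sqsum k Y != 0.
Proof.
move=> /row_minor_sqsum_neq0; apply: contraNneq => sum0; apply/eqP.
by apply: (psumr_eq0P _ sum0) => // f' _; apply: sumr_ge0 => g' _; apply: sqr_ge0.
Qed.

Lemma row_minor_sqsum_det (A : comPzRingType) (m n k : nat)
    (f : {ffun 'I_k -> 'I_m}) (Y : 'M[A]_(m, n)) :
  row_minor_sqsum f Y != 0 -> exists g, \det (mxsub f g Y) != 0.
Proof.
move=> sum_neq0.
have [g det_g|det0] := pickP (fun g : {ffun 'I_k -> 'I_n} => \det (mxsub f g Y) != 0).
  by exists g.
by move/eqP: sum_neq0; case; apply: big1 => g _; rewrite (eqP (negbFE (det0 g))) expr0n.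
Qed.

Lemma det_mul_thin (F : fieldType) (k : nat) (B : 'M[F]_(k.+1, k)) (C : 'M[F]_(k, k.+1)) :
  \det (B *m C) = 0.
Proof.
apply/eqP; apply: contraT => det_neq0.
have /mxrank_unit rkBC : B *m C \in unitmx by rewrite unitmxE unitfE.
by have := mxrankM_maxl B C; rewrite rkBC ltnNge rank_leq_col.
Qed.

Lemma minor_sqsum_mul (F : fieldType) (m n r : nat) (B : 'M[F]_(m, r)) (C : 'M[F]_(r, n)) :
  minor_sqsum r.+1 (B *m C) = 0.
Proof.
apply: big1 => f _; apply: big1 => g _.
by rewrite mxsub_mul det_mul_thin expr0n.
Qed.

Lemma perm_map2 (N : nat) (x0 x1 y0 y1 : 'I_N) :
  x0 != x1 -> y0 != y1 -> exists p : 'S_N, p x0 = y0 /\ p x1 = y1.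
Proof.
move=> ne_x ne_y; pose p1 := tperm x0 y0.
have ne_p1 : p1 x1 != y0.
  by rewrite -[X in _ != X](tpermL x0 y0) (inj_eq perm_inj) eq_sym.
exists (p1 * tperm (p1 x1) y1)%g; rewrite !permM tpermL.
by split; [rewrite tpermD // eq_sym | rewrite tpermL].
Qed.

Definition nonconstant_colperm (m n : nat) (sg : {ffun 'I_n -> 'S_m}) : bool :=
  [exists j, exists k, sg j != sg k].

Section Witnesses.
Variables (R : realType) (m n r : nat).

(* The rank-<= r matrix with a one in position (aa (g i), colf i) for each
   index i : 'I_k, and zeros elsewhere; it factors through 'I_r via g. *)
Definition pattern_mx (k : nat) (aa : 'I_r -> 'I_m) (g : 'I_k -> 'I_r)
    (colf : 'I_k -> 'I_n) : 'M[R]_(m, n) :=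
  (\matrix_(i, c) (i == aa c)%:R) *m
  (\matrix_(c, j) [exists i0, (colf i0 == j) && (g i0 == c)]%:R).

Lemma pattern_mx_col (k : nat) (aa : 'I_r -> 'I_m) (g : 'I_k -> 'I_r)
    (colf : 'I_k -> 'I_n) (i0 : 'I_k) (i : 'I_m) :
  injective colf -> pattern_mx aa g colf i (colf i0) = (i == aa (g i0))%:R.
Proof.
move=> colf_inj; rewrite !mxE (bigD1 (g i0)) //= !mxE big1 ?addr0.
  by case: existsP => [_|[]]; [rewrite mulr1 | exists i0; rewrite !eqxx].
move=> c ne_c; rewrite !mxE; case: existsP => [[i1 /andP [/eqP eq_col /eqP eq_g]]|_].
  by move: ne_c; rewrite -eq_g (colf_inj _ _ eq_col) eqxx.
by rewrite mulr0.
Qed.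

Lemma row_minor_witness (f : {ffun 'I_r -> 'I_m}) :
  injective f -> (r <= n)%N ->
  exists W : 'M[R]_(m, n), lowrank r W /\ row_minor_sqsum f W != 0.
Proof.
move=> f_inj le_rn.
pose B : 'M[R]_(m, r) := \matrix_(i, c) (i == f c)%:R.
pose C : 'M[R]_(r, n) := \matrix_(c, j) ((c : nat) == j)%:R.
exists (B *m C); split; first exact: lowrank_mul.
pose g : {ffun 'I_r -> 'I_n} := [ffun c => widen_ord le_rn c].
apply: (@row_minor_sqsum_neq0 _ _ _ _ f g).
suff -> : mxsub f g (B *m C) = 1%:M by rewrite det1 oner_neq0.
apply/matrixP => a b; rewrite !mxE (bigD1 a) //= !mxE eqxx mul1r big1 ?addr0.
  by rewrite ffunE /= val_eqE.
by move=> c ne_ca; rewrite !mxE (inj_eq f_inj) eq_sym (negbTE ne_ca) mul0r.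
Qed.

(* If the column permutations sg are not all equal, then colperm_mx sg W has
   rank > r for some W in M: pick columns j, k where sg j, sg k send two
   different rows to the same row a, and put r + 1 ones into W whose images
   under sg form an identity minor, two of them lying in row a. *)
Lemma colperm_minor_witness (sg : {ffun 'I_n -> 'S_m}) :
  (0 < r)%N -> (r < minn m n)%N -> nonconstant_colperm sg ->
  exists W : 'M[R]_(m, n), lowrank r W /\ minor_sqsum r.+1 (colperm_mx sg W) != 0.
Proof.
move=> r_gt0; rewrite leq_min => /andP [lt_rm lt_rn] /existsP [j /existsP [k ne_sg]].
have ne_jk : j != k by apply: contraNneq ne_sg => ->.
have [a ne_a] : exists a, ((sg j)^-1)%g a != ((sg k)^-1)%g a.
  apply/existsP; apply: contraNT ne_sg => /existsPn eq_inv.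
  apply/eqP/invg_inj/permP => x; exact/eqP/negbNE/eq_inv.
(* The minor uses rows rowf and columns colf, where (rowf 0, colf 0) =
   ((sg j)^-1 a, j) and (rowf 1, colf 1) = ((sg k)^-1 a, k) are both moved
   by sg to row a. *)
pose z0 : 'I_r.+1 := ord0; pose z1 : 'I_r.+1 := lift ord0 (Ordinal r_gt0).
have ne_z N (le_N : (r.+1 <= N)%N) : widen_ord le_N z0 != widen_ord le_N z1.
  by rewrite -val_eqE.
have [pc [pc0 pc1]] := perm_map2 (ne_z n lt_rn) ne_jk.
have [pr [pr0 pr1]] := perm_map2 (ne_z m lt_rm) ne_a.
pose colf (i : 'I_r.+1) := pc (widen_ord lt_rn i).
pose rowf (i : 'I_r.+1) := pr (widen_ord lt_rm i).
have colf_inj : injective colf by move=> x y /perm_inj /(congr1 val) /= /val_inj.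
have rowf_inj : injective rowf by move=> x y /perm_inj /(congr1 val) /= /val_inj.
(* Positions 0 and 1 share a row, so r rows aa of W carry all r + 1 ones. *)
pose grp (i : 'I_r.+1) := odflt (Ordinal r_gt0) (unlift ord0 i).
pose aa (c : 'I_r) := sg (colf (lift ord0 c)) (rowf (lift ord0 c)).
have aa_grp i : aa (grp i) = sg (colf i) (rowf i).
  have [c ->|->] := unliftP ord0 i; first by rewrite /grp liftK.
  by rewrite /grp unlift_none /aa /colf /rowf -[lift _ _]/z1 -/z0 pc0 pc1 pr0 pr1 !permKV.
exists (pattern_mx aa grp colf); split; first exact: lowrank_mul.
pose rows : {ffun 'I_r.+1 -> 'I_m} := [ffun i => rowf i].
pose cols : {ffun 'I_r.+1 -> 'I_n} := [ffun i => colf i].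
apply: (@minor_sqsum_neq0 _ _ _ _ rows cols).
suff -> : mxsub rows cols (colperm_mx sg (pattern_mx aa grp colf)) = 1%:M.
  by rewrite det1 oner_neq0.
apply/matrixP => x y; rewrite [LHS]mxE !ffunE [LHS]mxE pattern_mx_col // aa_grp mxE.
by rewrite (inj_eq perm_inj) (inj_eq rowf_inj).
Qed.

End Witnesses.

(* Nonzero (over the reals) iff colperm_mx sg Y has rank > r for every
   nonconstant sg: shuffling the columns of Y separately leaves M. *)
Definition mixing_obstruction (A : comPzRingType) (m n r : nat) (Y : 'M[A]_(m, n)) : A :=
  \prod_(sg : {ffun 'I_n -> 'S_m} | nonconstant_colperm sg)
     minor_sqsum r.+1 (colperm_mx sg Y).

(* Nonzero (over the reals) iff every r rows of Y are linearly independent. *)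
Definition row_genericity (A : comPzRingType) (m n r : nat) (Y : 'M[A]_(m, n)) : A :=
  \prod_(f : {ffun 'I_r -> 'I_m} | injectiveb f) row_minor_sqsum f Y.

Definition genericity_poly (R : realType) (m n r : nat) : {mpoly R[m * n]} :=
  mixing_obstruction r (generic_mx R m n) * row_genericity r (generic_mx R m n).

Section GenericityPolynomial.
Variables (R : realType) (m n r : nat).

Lemma colperm_minor_natural (sg : {ffun 'I_n -> 'S_m}) :
  natural_mx_fun (fun A Y => minor_sqsum r.+1 (@colperm_mx A m n sg Y)).
Proof. by move=> A B phi Y; rewrite colperm_mx_map minor_sqsum_map. Qed.

Lemma row_minor_natural (f : {ffun 'I_r -> 'I_m}) :
  natural_mx_fun (fun A Y => @row_minor_sqsum A m n r f Y).
Proof. by move=> A B phi Y; apply: row_minor_sqsum_map. Qed.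

Lemma mixing_obstruction_natural :
  natural_mx_fun (fun A Y => @mixing_obstruction A m n r Y).
Proof.
move=> A B phi Y; rewrite rmorph_prod; apply: eq_bigr => sg _.
exact: colperm_minor_natural.
Qed.

Lemma row_genericity_natural : natural_mx_fun (fun A Y => @row_genericity A m n r Y).
Proof.
move=> A B phi Y; rewrite rmorph_prod; apply: eq_bigr => f _.
exact: row_minor_natural.
Qed.

Lemma genericity_poly_eval (X : 'M[R]_(m, n)) :
  mx_eval (genericity_poly R m n r) X = mixing_obstruction r X * row_genericity r X.
Proof.
rewrite mx_evalM (mx_eval_natural X mixing_obstruction_natural).
by rewrite (mx_eval_natural X row_genericity_natural).
Qed.

(* Each factor of the genericity polynomial is nonzero somewhere on M, hence
   (M being irreducible) so is the product, and U is dense in M. *)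
Lemma genericity_poly_nzd :
  (0 < r)%N -> (r < minn m n)%N -> @lowrank_nzd R m n r (genericity_poly R m n r).
Proof.
move=> r_gt0 lt_r_mn; have := lt_r_mn; rewrite leq_min => /andP [_ lt_rn].
apply: lowrank_nzdM; apply: lowrank_nzd_prod.
  move=> sg nc_sg.
  have [W [lrW minW]] := @colperm_minor_witness R m n r sg r_gt0 lt_r_mn nc_sg.
  apply: (lowrank_nzd_witness lrW).
  by rewrite (mx_eval_natural W (colperm_minor_natural sg)).
move=> f /injectiveP f_inj.
have [W [lrW rowW]] := @row_minor_witness R m n r f f_inj (ltnW lt_rn).
apply: (lowrank_nzd_witness lrW).
by rewrite (mx_eval_natural W (row_minor_natural f)).
Qed.

End GenericityPolynomial.

Section Factorizations.
Variables (R : realType) (m n r : nat).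
Hypothesis le_rm : (r <= m)%N.

Local Notation top := (rowsub (widen_ord le_rm)).

Lemma top_idE (B : 'M[R]_(m, r)) : top_id B <-> top B = 1%:M.
Proof.
split=> [idB | topB i j lt_ir].
  by apply/matrixP => i j; rewrite !mxE idB //= ltn_ord.
have := congr1 (fun M : 'M[R]_r => M (Ordinal lt_ir) j) topB; rewrite !mxE.
by have -> : widen_ord le_rm (Ordinal lt_ir) = i by apply: val_inj.
Qed.

(* If rank Y <= r and the first r rows T of Y are independent, then Y = B T
   with B = Y T^+ and B has top block I_r; conversely any such factorization
   has C = T, and then B is determined since T is row-free. *)
Lemma unique_normalized_factorization (Y : 'M[R]_(m, n)) :
  lowrank r Y -> row_free (top Y) ->
  exists BC : 'M[R]_(m, r) * 'M[R]_(r, n),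
    (top_id BC.1 /\ Y = BC.1 *m BC.2) /\
    forall B C, top_id B -> Y = B *m C -> (B, C) = BC.
Proof.
move=> lrY freeT; set T := top Y.
have sTY : (T <= Y)%MS by rewrite /T rowsubE submxMl.
have sYT : (Y <= T)%MS.
  have [le_TY <-] := mxrank_leqif_sup sTY.
  by rewrite eqn_leq le_TY (eqP freeT).
have defY : Y = (Y *m pinvmx T) *m T by rewrite mulmxKpV.
exists (Y *m pinvmx T, T); split.
  split=> //=; apply/top_idE.
  by apply: (row_free_inj freeT); rewrite mul1mx mul_rowsub_mx -defY.
move=> B C /top_idE topB defBC.
have defC : C = T by rewrite /T defBC -mul_rowsub_mx topB mul1mx.
rewrite defC; congr (_, _); apply: (row_free_inj freeT).
by rewrite -defY {2}defBC defC.
Qed.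

Lemma perm_mx_entry (s : 'S_m) (X : 'M[R]_(m, n)) i j :
  (perm_mx s *m X) i j = X (s i) j.
Proof. by rewrite -row_permE mxE. Qed.

Lemma top_row_free (X : 'M[R]_(m, n)) (s : 'S_m) :
  row_genericity r X != 0 -> row_free (top (perm_mx s *m X)).
Proof.
move=> /prodf_neq0 rowsX.
pose f : {ffun 'I_r -> 'I_m} := [ffun c => s (widen_ord le_rm c)].
have f_inj : injectiveb f.
  by apply/injectiveP => x y; rewrite !ffunE => /perm_inj /(congr1 val) /= /val_inj.
have [g det_g] := row_minor_sqsum_det (rowsX f f_inj).
have sub_g : mxsub f g X = colsub g (top (perm_mx s *m X)).
  apply/matrixP => i j.
  by rewrite [LHS]mxE ffunE [RHS]mxE [rowsub _ _ _ _]mxE perm_mx_entry.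
rewrite /row_free eqn_leq rank_leq_row /=.
have /mxrank_unit rk_r : colsub g (top (perm_mx s *m X)) \in unitmx.
  by rewrite -sub_g unitmxE unitfE.
by rewrite -{1}rk_r -[top _]mulmx1 -mulmx_colsub mulmx1 mxrankM_maxl.
Qed.

End Factorizations.

Section PowerSumSystem.
Variables (R : realType) (m n r : nat).

Lemma Yset_colperm (X : 'M[R]_(m, n)) (B : 'M[R]_(m, r)) (C : 'M[R]_(r, n)) :
  Yset X B C -> exists sg : {ffun 'I_n -> 'S_m}, B *m C = colperm_mx sg X.
Proof.
move=> [_ psumBC].
have col_perm j : exists s : 'S_m, [forall i, (B *m C) i j == X (s i) j].
  have [s defBC] := @power_sums_perm R m (fun i => X i j) (fun i => (B *m C) i j)
    (fun l lt_l => esym (psumBC l j lt_l)).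
  by exists s; apply/forallP => i; rewrite defBC.
exists [ffun j => xchoose (col_perm j)]; apply/matrixP => i j.
by rewrite [RHS]mxE ffunE; apply/eqP/(forallP (xchooseP (col_perm j))).
Qed.

Lemma Yset_perm (X : 'M[R]_(m, n)) (B : 'M[R]_(m, r)) (C : 'M[R]_(r, n)) :
  (0 < n)%N -> mixing_obstruction r X != 0 ->
  Yset X B C <-> exists s : 'S_m, top_id B /\ perm_mx s *m X = B *m C.
Proof.
move=> n_gt0 mixX; split=> [YBC | [s [idB defBC]]].
  have [sg defBC] := Yset_colperm YBC.
  have sg_const : ~~ nonconstant_colperm sg.
    apply/negP => /(prodf_neq0 _ _ mixX).
    by rewrite -defBC minor_sqsum_mul eqxx.
  pose j0 : 'I_n := Ordinal n_gt0.
  exists (sg j0); split; first by case: YBC.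
  rewrite defBC; apply/matrixP => i j; rewrite perm_mx_entry mxE.
  by move: sg_const => /existsPn /(_ j0) /existsPn /(_ j) /negbNE /eqP ->.
split=> // l j _; rewrite -defBC; under eq_bigr do rewrite perm_mx_entry.
by rewrite [RHS](reindex_inj (@perm_inj _ s)).
Qed.

End PowerSumSystem.

Unset Implicit Arguments.

Theorem theorem2 (R : realType) (m n r : nat) :
  (0 < r)%N -> (r < minn m n)%N ->
  exists U : 'M[R]_(m, n) -> Prop,
    zariski_open_in (@lowrank R m n r) U /\
    zariski_dense_in (@lowrank R m n r) U /\
    forall X : 'M[R]_(m, n), U X ->
      (forall s : 'S_m,
         exists BC : 'M[R]_(m, r) * 'M[R]_(r, n),
           (top_id BC.1 /\ perm_mx s *m X = BC.1 *m BC.2) /\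
           forall B C, top_id B -> perm_mx s *m X = B *m C -> (B, C) = BC) /\
      (forall (B : 'M[R]_(m, r)) (C : 'M[R]_(r, n)),
         Yset X B C <->
         exists s : 'S_m, top_id B /\ perm_mx s *m X = B *m C).
Proof.
move=> r_gt0 lt_r_mn; have := lt_r_mn; rewrite leq_min => /andP [lt_rm lt_rn].
pose P := genericity_poly R m n r.
exists (fun X => lowrank r X /\ mx_eval P X <> 0); split; [|split].
- exists (fun p => p = P) => X.
  by split=> [[lrX PX]|[lrX [_ [-> PX]]]]; split=> //; exists P.
- move=> q qU X lrX; apply: (genericity_poly_nzd r_gt0 lt_r_mn) => // Y lrY.
  have [->|PY] := eqVneq (mx_eval P Y) 0; first by rewrite mul0r.
  by rewrite qU ?mulr0 //; split=> //; apply/eqP.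
- move=> X [lrX]; rewrite genericity_poly_eval => /eqP.
  rewrite mulf_eq0 negb_or => /andP [mixX rowsX]; split=> [s|B C].
    have lr_sX : lowrank r (perm_mx s *m X).
      by rewrite /lowrank (leq_trans (mxrankM_maxr _ _)).
    exact: unique_normalized_factorization lr_sX (top_row_free (ltnW lt_rm) s rowsX).
  by apply: Yset_perm; first exact: leq_ltn_trans lt_rn.
Qed.
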